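(* Let $(\mathbb{T},G)$ be a minimal equicontinuous topological dynamical system with $\mathbb{T}$ infinite, and let $\theta,\theta'\in\mathbb{T}$. Then every neighbourhood of the neutral element $e$ of $E(\mathbb{T})$ contains some $g\in G$ (regarded as an element of $E(\mathbb{T})$) with $g\theta\neq\theta$ and $g\theta'\neq\theta'$.
   Context: A topological dynamical system $(X,G)$ consists of a topological group $G$ acting jointly continuously on the left on a compact Hausdorff space $X$; we write $gx$ for the action. It is minimal if every orbit $Gx$ is dense in $X$, and equicontinuous if the family of maps $\{x\mapsto gx: g\in G\}$ is equicontinuous with respect to the unique uniformity of $X$. The Ellis semigroup $E(X)$ is the closure of $\{x\mapsto gx:g\in G\}$ in $X^X$ with the topology of pointwise convergence; elements of $G$ are regarded as elements of $E(X)$. For $(\mathbb{T},G)$ minimal and equicontinuous it is known that $E(\mathbb{T})$ is a compact Hausdorff topological group consisting of homeomorphisms of $\mathbb{T}$, acting jointly continuously and transitively on $\mathbb{T}$ and extending the action of $G$. *)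

From Stdlib Require Import List.
Import ListNotations.
Set Implicit Arguments.

Definition is_topology {X : Type} (op : (X -> Prop) -> Prop) : Prop :=
  op (fun _ => True) /\ op (fun _ => False) /\
  (forall U V, op U -> op V -> op (fun x => U x /\ V x)) /\
  (forall F : (X -> Prop) -> Prop, (forall U, F U -> op U) ->
     op (fun x => exists U, F U /\ U x)).

Definition prod_open {X Y : Type} (opX : (X -> Prop) -> Prop) (opY : (Y -> Prop) -> Prop)
  (W : X * Y -> Prop) : Prop :=
  forall p, W p -> exists U V, opX U /\ opY V /\ U (fst p) /\ V (snd p) /\
    forall a b, U a -> V b -> W (a, b).

Definition continuous {X Y : Type} (opX : (X -> Prop) -> Prop) (opY : (Y -> Prop) -> Prop)
  (f : X -> Y) : Prop :=
  forall V, opY V -> opX (fun x => V (f x)).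

Definition hausdorff {X : Type} (op : (X -> Prop) -> Prop) : Prop :=
  forall x y, x <> y -> exists U V, op U /\ op V /\ U x /\ V y /\
    forall z, U z -> V z -> False.

Definition compact {X : Type} (op : (X -> Prop) -> Prop) : Prop :=
  forall F : (X -> Prop) -> Prop, (forall U, F U -> op U) ->
    (forall x, exists U, F U /\ U x) ->
    exists l : list (X -> Prop), (forall U, In U l -> F U) /\
      forall x, exists U, In U l /\ U x.

Definition infinite_type (X : Type) : Prop :=
  ~ exists l : list X, forall x, In x l.

Definition topological_group {G : Type} (opG : (G -> Prop) -> Prop)
  (mul : G -> G -> G) (inv : G -> G) (e : G) : Prop :=
  is_topology opG /\
  (forall a b c, mul a (mul b c) = mul (mul a b) c) /\
  (forall a, mul e a = a) /\ (forall a, mul a e = a) /\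
  (forall a, mul (inv a) a = e) /\ (forall a, mul a (inv a) = e) /\
  continuous (prod_open opG opG) opG (fun p => mul (fst p) (snd p)) /\
  continuous opG opG inv.

Definition continuous_action {G X : Type} (opG : (G -> Prop) -> Prop)
  (opX : (X -> Prop) -> Prop) (mul : G -> G -> G) (e : G) (act : G -> X -> X) : Prop :=
  (forall x, act e x = x) /\
  (forall g h x, act (mul g h) x = act g (act h x)) /\
  continuous (prod_open opG opX) opX (fun p => act (fst p) (snd p)).

Definition minimal_action {G X : Type} (opX : (X -> Prop) -> Prop) (act : G -> X -> X) : Prop :=
  forall x U, opX U -> (exists y, U y) -> exists g, U (act g x).

(* Entourages of the unique uniformity of a compact Hausdorff space:
   the neighbourhoods of the diagonal in X * X. *)
Definition entourage {X : Type} (opX : (X -> Prop) -> Prop) (V : X * X -> Prop) : Prop :=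
  exists O, prod_open opX opX O /\ (forall x, O (x, x)) /\ forall p, O p -> V p.

Definition equicontinuous_action {G X : Type} (opX : (X -> Prop) -> Prop)
  (act : G -> X -> X) : Prop :=
  forall x V, entourage opX V ->
    exists U, opX U /\ U x /\ forall y g, U y -> V (act g x, act g y).

Definition pw_open {X : Type} (opX : (X -> Prop) -> Prop) (W : (X -> X) -> Prop) : Prop :=
  forall f, W f -> exists l : list (X * (X -> Prop)),
    (forall p, In p l -> opX (snd p) /\ snd p (f (fst p))) /\
    forall h, (forall p, In p l -> snd p (h (fst p))) -> W h.

Definition ellis {G X : Type} (opX : (X -> Prop) -> Prop) (act : G -> X -> X)
  (f : X -> X) : Prop :=
  forall W, pw_open opX W -> W f -> exists g, W (act g).

Definition ellis_nbhd_id {G X : Type} (opX : (X -> Prop) -> Prop) (act : G -> X -> X)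
  (N : (X -> X) -> Prop) : Prop :=
  (forall f, N f -> ellis opX act f) /\
  exists W, pw_open opX W /\ W (fun x => x) /\
    forall f, W f -> ellis opX act f -> N f.

(* A basic neighbourhood of the identity in the
   pointwise topology is a finite list of constraints "f x_i lies in U_i",
   with U_i open around x_i.

   1. Equicontinuity plus compactness cut G into finitely many cells such that
      g^-1 g' satisfies a given finite list of constraints whenever g, g' lie
      in a common cell (finite_small_partition).
   2. Hence, if every g satisfying the constraints fixed a point th, the map
      g |-> g th would be constant on each cell, so the orbit of th would be
      finite.  By minimality a finite orbit is dense, and finite sets are
      closed, so X would be finite.  Thus every basic neighbourhood contains
      some g moving th (nbhd_moves_point).
   3. For the theorem, pick a in the neighbourhood with a theta <> theta.  If
      a theta' = theta' we look, in the smaller neighbourhood pulled back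
      along a that also forces a b theta <> theta, for b with
      b theta' <> theta'; then a b moves both points.  *)

From Stdlib Require Import List Classical FunctionalExtensionality PropExtensionality.
Import ListNotations.

Section Topology.

Context {X : Type} {op : (X -> Prop) -> Prop}.
Hypothesis Htop : is_topology op.

Lemma op_ext (U V : X -> Prop) : op U -> (forall x, U x <-> V x) -> op V.
Proof.
  intros HU E. replace V with U; auto.
  extensionality x. apply propositional_extensionality, E.
Qed.

Lemma open_local (P : X -> Prop) :
  (forall y, P y -> exists W, op W /\ W y /\ forall u, W u -> P u) -> op P.
Proof.
  intros H. destruct Htop as (_ & _ & _ & Hunion).
  apply op_ext with (fun x => exists W, (op W /\ forall u, W u -> P u) /\ W x).
  - apply Hunion. intros W [HW _]; exact HW.
  - intros x; split.
    + intros (W & (_ & HWP) & Wx); auto.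
    + intros Px. destruct (H x Px) as (W & HW & Wx & HWP). eauto.
Qed.

Lemma open_inter (U V : X -> Prop) : op U -> op V -> op (fun x => U x /\ V x).
Proof. destruct Htop as (_ & _ & Hinter & _); auto. Qed.

Hypothesis Hhaus : hausdorff op.

Lemma open_neq (z : X) : op (fun y => y <> z).
Proof.
  apply open_local. intros y Hy.
  destruct (Hhaus y z Hy) as (U & V & HU & HV & Uy & Vz & Hdisj).
  exists U; repeat split; auto. intros u Uu E; subst; eauto.
Qed.

Lemma open_notin (L : list X) : op (fun y => ~ In y L).
Proof.
  induction L as [|z L IH].
  - apply op_ext with (fun _ => True); [apply Htop | simpl; tauto].
  - apply op_ext with (fun y => y <> z /\ ~ In y L).
    + apply open_inter; [apply open_neq | exact IH].
    + intros y; simpl; split.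
      * intros [H1 H2] [H|H]; [congruence | tauto].
      * intros H; split; intros H'; apply H; auto.
Qed.

Hypothesis Hcomp : compact op.

Lemma regular (x : X) (U : X -> Prop) :
  op U -> U x -> exists A B, op A /\ op B /\ A x /\
    (forall z, A z -> B z -> False) /\ (forall z, ~ U z -> B z).
Proof.
  intros HU Ux.
  (* Cover X by U and by open sets having a neighbourhood of x disjoint from them. *)
  set (F := fun W => W = U \/
    (op W /\ exists A, op A /\ A x /\ forall z, A z -> W z -> False)).
  assert (HFop : forall W, F W -> op W) by (intros W [E|[H _]]; subst; auto).
  destruct (Hcomp F HFop) as (l & Hl & Hcov).
  { intros z. destruct (classic (U z)) as [Uz|Uz].
    - exists U; split; [left|]; auto.
    - assert (E : x <> z) by (intros E; subst; auto).
      destruct (Hhaus x z E) as (A & B & HA & HB & Ax & Bz & D).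
      exists B; split; auto. right; split; eauto. }
  (* Intersect the finitely many neighbourhoods of x attached to the subcover. *)
  assert (Hsep : forall l', (forall W, In W l' -> F W) -> exists A, op A /\ A x /\
     forall W, In W l' -> W = U \/ forall z, A z -> W z -> False).
  { induction l' as [|W l' IH]; intros HF.
    - exists (fun _ => True). split; [apply Htop|]. split; [exact I|]. intros W [].
    - destruct IH as (A & HA & Ax & HAl). { intros; apply HF; simpl; auto. }
      destruct (HF W (or_introl eq_refl)) as [E|(_ & A' & HA' & A'x & D)].
      + exists A; repeat split; auto. intros W' [E'|H]; subst; auto.
      + exists (fun z => A z /\ A' z). split; [apply open_inter; auto|]. split; [auto|].
        intros W' [E'|H].
        * subst W'. right. intros z [_ Az'] Wz. eauto.
        * destruct (HAl W' H) as [E'|E']; auto. right; intros z [Az _]; eauto. }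
  destruct (Hsep l Hl) as (A & HA & Ax & HAl).
  exists A, (fun z => exists W, In W l /\ (forall z', A z' -> W z' -> False) /\ W z).
  split; auto. split.
  - apply open_local. intros y (W & HW & D & Wy). exists W. repeat split; eauto.
  - split; auto. split.
    + intros z Az (W & _ & D & Wz); eauto.
    + intros z Uz. destruct (Hcov z) as (W & HW & Wz).
      exists W; split; auto. split; auto.
      destruct (HAl W HW) as [E|E]; auto. subst; contradiction.
Qed.

Lemma entourage_into (x : X) (U : X -> Prop) :
  op U -> U x -> exists O, entourage op O /\ forall w y, O (w, x) -> O (w, y) -> U y.
Proof.
  intros HU Ux.
  destruct (regular x U HU Ux) as (A & B & HA & HB & Ax & Hdisj & HUB).
  assert (HAU : forall z, A z -> U z) by (intros z Az; apply NNPP; eauto).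
  set (O := fun p : X * X => (A (fst p) /\ A (snd p)) \/
     (U (fst p) /\ fst p <> x /\ U (snd p) /\ snd p <> x) \/ (B (fst p) /\ B (snd p))).
  assert (HUx : op (fun w => U w /\ w <> x)) by (apply open_inter; [exact HU | apply open_neq]).
  exists O. split.
  - exists O. split; [|split; [|auto]].
    + intros p [[H1 H2]|[[H1 [H2 [H3 H4]]]|[H1 H2]]].
      * exists A, A. repeat split; auto. intros a b Ha Hb; left; auto.
      * exists (fun w => U w /\ w <> x), (fun w => U w /\ w <> x).
        repeat split; auto. intros a b [? ?] [? ?]; right; left; simpl; auto.
      * exists B, B. repeat split; auto. intros a b Ha Hb; right; right; auto.
    + intros z. destruct (classic (A z)) as [Az|nA]; [left; auto|].
      destruct (classic (U z)) as [Uz|nU].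
      * right; left; simpl. assert (z <> x) by (intros E; subst; auto). auto.
      * right; right; simpl; auto.
  - intros w y [[H1 H2]|[[_ [_ [_ H]]]|[H1 H2]]] H'; simpl in *.
    + destruct H' as [[_ H]|[[_ [_ [H _]]]|[H3 _]]]; simpl in *; eauto.
      exfalso; eauto.
    + congruence.
    + exfalso; eauto.
Qed.

End Topology.

Lemma continuous_slice {A B C : Type} {opA : (A -> Prop) -> Prop}
  {opB : (B -> Prop) -> Prop} {opC : (C -> Prop) -> Prop} {f : A * B -> C} (a : A) :
  is_topology opB -> continuous (prod_open opA opB) opC f ->
  continuous opB opC (fun b => f (a, b)).
Proof.
  intros HtB Hf V HV. apply open_local; auto. intros b Hb.
  destruct (Hf V HV (a, b) Hb) as (U & W & _ & HW & Ua & Wb & H).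
  exists W. split; [exact HW|split; [exact Wb|]].
  intros u Wu. exact (H a u Ua Wu).
Qed.

(* A finite list of constraints "f x lies in U" describes the basic open set
   [in_basic l] of the pointwise topology; it is a basic neighbourhood of the
   identity when each U is open and contains its x. *)
Definition in_basic {X : Type} (l : list (X * (X -> Prop))) (f : X -> X) : Prop :=
  forall p, In p l -> snd p (f (fst p)).

Definition basic_nbhd {X : Type} (opX : (X -> Prop) -> Prop)
  (l : list (X * (X -> Prop))) : Prop :=
  forall p, In p l -> opX (snd p) /\ snd p (fst p).

Definition pull {X : Type} (f : X -> X) (l : list (X * (X -> Prop))) :
  list (X * (X -> Prop)) :=
  map (fun p => (fst p, fun y => snd p (f y))) l.

Lemma basic_nbhd_pull {X : Type} {opX : (X -> Prop) -> Prop} {f : X -> X}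
  {l : list (X * (X -> Prop))} :
  continuous opX opX f -> (forall p, In p l -> opX (snd p)) -> in_basic l f ->
  basic_nbhd opX (pull f l).
Proof.
  intros Hf Hop Hin p Hp. apply in_map_iff in Hp. destruct Hp as (q & <- & Hq).
  simpl. split; [apply Hf, Hop | apply Hin]; exact Hq.
Qed.

Lemma in_basic_pull {X : Type} {f h : X -> X} {l : list (X * (X -> Prop))} :
  in_basic (pull f l) h -> in_basic l (fun x => f (h x)).
Proof.
  intros Hh p Hp. apply (Hh (fst p, fun y => snd p (f y))).
  apply in_map_iff. exists p; auto.
Qed.

Lemma ellis_nbhd_basic {G X : Type} {opX : (X -> Prop) -> Prop} {act : G -> X -> X}
  {N : (X -> X) -> Prop} :
  ellis_nbhd_id opX act N ->
  exists l, basic_nbhd opX l /\ forall g, in_basic l (act g) -> N (act g).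
Proof.
  intros (_ & W & HW & Wid & HWN).
  destruct (HW (fun x => x) Wid) as (l & Hl & Hlw).
  exists l. split; [exact Hl|].
  intros g Hg. apply HWN; [apply Hlw; exact Hg|].
  intros W' _ HW'. eauto.
Qed.

Lemma cellwise_constant_finite {A B : Type} (T : list (A -> Prop)) (f : A -> B) :
  (forall P, In P T -> forall a a', P a -> P a' -> f a = f a') ->
  exists L : list B, forall P, In P T -> forall a, P a -> In (f a) L.
Proof.
  induction T as [|P T IH]; intros Hconst.
  - exists []; intros P [].
  - destruct IH as (L & HL). { intros; eapply Hconst; simpl; eauto. }
    destruct (classic (exists a0, P a0)) as [(a0 & Pa0)|Pempty].
    + exists (f a0 :: L). intros P' [<-|HP'] a Pa.
      * left. apply (Hconst P); simpl; auto.
      * right; eauto.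
    + exists L. intros P' [<-|HP'] a Pa; [exfalso|]; eauto.
Qed.

Section EquicontinuousAction.

Context {G X : Type} {mul : G -> G -> G} {inv : G -> G} {e : G}.
Context {opX : (X -> Prop) -> Prop} {act : G -> X -> X}.

Hypothesis act_unit : forall x, act e x = x.
Hypothesis act_mul : forall g h x, act (mul g h) x = act g (act h x).
Hypothesis mul_inv_l : forall a, mul (inv a) a = e.
Hypothesis mul_inv_r : forall a, mul a (inv a) = e.

Lemma act_cancel_l (g : G) (y : X) : act (inv g) (act g y) = y.
Proof. rewrite <- act_mul, mul_inv_l; apply act_unit. Qed.

Lemma act_cancel_r (g : G) (y : X) : act g (act (inv g) y) = y.
Proof. rewrite <- act_mul, mul_inv_r; apply act_unit. Qed.

Hypothesis Htop : is_topology opX.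
Hypothesis Hcomp : compact opX.
Hypothesis Hhaus : hausdorff opX.
Hypothesis Hequi : equicontinuous_action opX act.

(* Finitely many sets Q cover X, and if g x and g' x lie in a common Q then
   g^-1 g' x lies in U: this is equicontinuity at the points covered by Q. *)
Lemma equicontinuous_cover (x : X) (U : X -> Prop) :
  opX U -> U x ->
  exists C : list (X -> Prop), (forall z, exists Q, In Q C /\ Q z) /\
    forall Q g g', In Q C -> Q (act g x) -> Q (act g' x) -> U (act (inv g) (act g' x)).
Proof.
  intros HU Ux.
  destruct (entourage_into Htop Hhaus Hcomp x U HU Ux) as (O & Hent & Hinto).
  set (F := fun Q => opX Q /\ exists z, forall y g, Q y -> O (act g z, act g y)).
  destruct (Hcomp F) as (C & HC & Hcov).
  { intros Q [HQ _]; exact HQ. }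
  { intros z. destruct (Hequi z O Hent) as (W & HW & Wz & HWz).
    exists W; split; [split; eauto | exact Wz]. }
  exists C; split; [exact Hcov|].
  intros Q g g' HQ Qg Qg'. destruct (HC Q HQ) as (_ & z & Hz).
  apply (Hinto (act (inv g) z)); [rewrite <- (act_cancel_l g x)|]; apply Hz; auto.
Qed.

(* Finitely many cells cover G, and g^-1 g' lies in the basic neighbourhood l
   whenever g and g' share a cell: intersect the covers of the constraints. *)
Lemma finite_small_partition (l : list (X * (X -> Prop))) :
  basic_nbhd opX l ->
  exists T : list (G -> Prop), (forall g, exists P, In P T /\ P g) /\
    forall P, In P T -> forall g g', P g -> P g' -> in_basic l (act (mul (inv g) g')).
Proof.
  induction l as [|[x U] l IH]; intros Hl.
  - exists [fun _ => True]. split.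
    + intros g; exists (fun _ => True); simpl; auto.
    + intros P _ g g' _ _ p [].
  - destruct IH as (T & HTcov & HTsmall). { intros p Hp; apply Hl; simpl; auto. }
    destruct (Hl (x, U) (or_introl eq_refl)) as [HU Ux]; simpl in HU, Ux.
    destruct (equicontinuous_cover x U HU Ux) as (C & HCcov & HCsmall).
    exists (flat_map (fun P => map (fun Q => fun g => P g /\ Q (act g x)) C) T). split.
    + intros g. destruct (HTcov g) as (P & HP & Pg).
      destruct (HCcov (act g x)) as (Q & HQ & Qg).
      exists (fun g => P g /\ Q (act g x)). split; auto.
      apply in_flat_map. exists P; split; auto. apply in_map_iff. exists Q; auto.
    + intros P' HP' g g'.
      apply in_flat_map in HP'. destruct HP' as (P & HP & HP').
      apply in_map_iff in HP'. destruct HP' as (Q & <- & HQ).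
      intros [Pg Qg] [Pg' Qg'] p [<-|Hp]; simpl.
      * rewrite act_mul. eauto.
      * eapply HTsmall; eauto.
Qed.

Hypothesis Hmin : minimal_action opX act.
Hypothesis Hinf : infinite_type X.

(* The orbit of any point is infinite: a finite orbit would be dense and closed. *)
Lemma orbit_escapes_finite (th : X) (L : list X) : exists g, ~ In (act g th) L.
Proof.
  apply NNPP; intros Hin. apply Hinf. exists L. intros x. apply NNPP; intros nx.
  destruct (Hmin th _ (open_notin Htop Hhaus L) (ex_intro _ x nx)) as (g & Hg).
  apply Hin; eauto.
Qed.

Lemma nbhd_moves_point (l : list (X * (X -> Prop))) (th : X) :
  basic_nbhd opX l -> exists g, in_basic l (act g) /\ act g th <> th.
Proof.
  intros Hl. apply NNPP; intros Hno.
  assert (Hstab : forall h, in_basic l (act h) -> act h th = th).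
  { intros h Hh. apply NNPP; intros E. apply Hno; eauto. }
  destruct (finite_small_partition l Hl) as (T & HTcov & HTsmall).
  destruct (cellwise_constant_finite T (fun g => act g th)) as (L & HL).
  { intros P HP g g' Pg Pg'.
    pose proof (Hstab _ (HTsmall P HP g g' Pg Pg')) as Hfix.
    rewrite act_mul in Hfix. rewrite <- Hfix at 1. apply act_cancel_r. }
  destruct (orbit_escapes_finite th L) as (g & Hg).
  destruct (HTcov g) as (P & HP & Pg). eauto.
Qed.

End EquicontinuousAction.

Theorem mainTheorem3 (G X : Type) (opG : (G -> Prop) -> Prop)
  (mul : G -> G -> G) (inv : G -> G) (e : G)
  (opX : (X -> Prop) -> Prop) (act : G -> X -> X)
  (HG : topological_group opG mul inv e)
  (HXtop : is_topology opX) (HXc : compact opX) (HXh : hausdorff opX)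
  (Hact : continuous_action opG opX mul e act)
  (Hmin : minimal_action opX act)
  (Heq : equicontinuous_action opX act)
  (Hinf : infinite_type X)
  (theta theta' : X)
  (N : (X -> X) -> Prop) (HN : ellis_nbhd_id opX act N) :
  exists g : G, N (act g) /\ act g theta <> theta /\ act g theta' <> theta'.
Proof.
  destruct HG as (_ & _ & _ & _ & Hinvl & Hinvr & _).
  destruct Hact as (Hae & Ham & Hcont).
  pose proof (nbhd_moves_point Hae Ham Hinvl Hinvr HXtop HXc HXh Heq Hmin Hinf) as Hmove.
  destruct (ellis_nbhd_basic HN) as (l & Hl & HlN).
  destruct (Hmove l theta Hl) as (a & Ha & Hath).
  destruct (classic (act a theta' = theta')) as [Hfix|Hmoved]; [|exists a; auto].
  (* Look for b near the identity with a b still in l, a b theta <> theta, b theta' <> theta'. *)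
  set (l2 := l ++ [(theta, fun y => y <> theta)]).
  assert (Hl2 : basic_nbhd opX (pull (act a) l2)).
  { apply basic_nbhd_pull.
    - exact (continuous_slice a HXtop Hcont).
    - intros p Hp. apply in_app_iff in Hp.
      destruct Hp as [Hp|[<-|[]]]; [apply Hl, Hp | apply open_neq; auto].
    - intros p Hp. apply in_app_iff in Hp. destruct Hp as [Hp|[<-|[]]]; auto. }
  destruct (Hmove _ theta' Hl2) as (b & Hb & Hbth').
  apply in_basic_pull in Hb.
  replace (fun x => act a (act b x)) with (act (mul a b)) in Hb
    by (extensionality x; apply Ham).
  exists (mul a b). split; [|split].
  - apply HlN. intros p Hp. apply Hb, in_app_iff; auto.
  - apply (Hb (theta, fun y => y <> theta)), in_app_iff; simpl; auto.
  - rewrite Ham. intros E. apply Hbth'.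
    pose proof (act_cancel_l Hae Ham Hinvl a) as Hcancel.
    rewrite <- (Hcancel (act b theta')), E, <- Hfix at 1. apply Hcancel.
Qed.
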